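(* Let $p$ be an odd prime and let $k$ be an integer with $2\le k\le p-1$. Let $k^{-1}$ denote the least non-negative integer congruent to the inverse of $k$ modulo $p$, and let $K=\min\{k,k^{-1}\}$. If $T$ is an orthogonal trade in $B_p$ of index $(1,k)$, then every symbol that occurs in $T$ occurs in $T$ more than $\log_K(p)+1$ times.
   Context: All arithmetic is modulo $p$. A Latin square of order $p$ is viewed as a set of (row, column, symbol) triples in $\mathbb{Z}_p^3$. For $1\le k\le p-1$, $B_p(k)$ is the Latin square with symbol $ki+j$ in cell $(i,j)$, $i,j\in\mathbb{Z}_p$; $B_p=B_p(1)$. A Latin trade in a Latin square $L$ is a subset $T\subseteq L$ for which there is a partial Latin square $T'$ (a disjoint mate) such that $T$ and $T'$ occupy the same set of cells, $T\cap T'=\emptyset$, and each row (respectively column) of $T$ contains the same set of symbols as the corresponding row (column) of $T'$. Two Latin squares of order $p$ are orthogonal if superimposing them yields each of the $p^2$ ordered pairs exactly once. An orthogonal trade of index $(\ell,k)$ is a Latin trade $T\subseteq B_p(\ell)$ having a disjoint mate $T'$ such that $(B_p(\ell)\setminus T)\cup T'$ is orthogonal to $B_p(k)$. *)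

From mathcomp Require Import all_boot.
From Stdlib Require Reals.
Set Implicit Arguments. Unset Strict Implicit. Unset Printing Implicit Defensive.

Definition trip (p : nat) := ('I_p * 'I_p * 'I_p)%type.

Definition cell {p} (t : trip p) : 'I_p * 'I_p := t.1.
Definition row {p} (t : trip p) : 'I_p := t.1.1.
Definition col {p} (t : trip p) : 'I_p := t.1.2.
Definition sym {p} (t : trip p) : 'I_p := t.2.

Definition Bp (p l : nat) : {set trip p} :=
  [set t : trip p | nat_of_ord (sym t) == (l * row t + col t) %% p].

Definition partial_latin p (P : {set trip p}) : Prop :=
  forall t u, t \in P -> u \in P ->
    [/\ cell t = cell u -> t = u,
        row t = row u -> sym t = sym u -> t = u &
        col t = col u -> sym t = sym u -> t = u].

Definition disjoint_mate p (T T' : {set trip p}) : Prop :=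
  [/\ partial_latin T',
      [set cell t | t in T] = [set cell t | t in T'],
      [disjoint T & T'],
      (forall r : 'I_p,
         [set sym t | t in T & row t == r] = [set sym t | t in T' & row t == r]) &
      (forall c : 'I_p,
         [set sym t | t in T & col t == c] = [set sym t | t in T' & col t == c])].

Definition latin_trade p (L T : {set trip p}) : Prop :=
  T \subset L /\ exists T', disjoint_mate T T'.

Definition orthogonal p (L1 L2 : {set trip p}) : Prop :=
  forall a b : 'I_p,
    #|[set x : 'I_p * 'I_p | ((x, a) \in L1) && ((x, b) \in L2)]| = 1.

Definition orthogonal_trade p (l k : nat) (T : {set trip p}) : Prop :=
  T \subset Bp p l /\
  exists T', disjoint_mate T T' /\ orthogonal ((Bp p l :\: T) :|: T') (Bp p k).

Definition kinv (p k : nat) : nat :=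
  if [pick x : 'I_p | (k * x) %% p == 1 %% p] is Some x then nat_of_ord x else 0.

Definition occ p (T : {set trip p}) (s : 'I_p) : nat :=
  #|[set t in T | sym t == s]|.

(* Fix a symbol s and let R be the set of rows in which s occurs in T.  The
   mate T' and the orthogonality with B_p(k) show that every i in R satisfies
   c i = a + (c - 1) b (mod p) for some a, b in R with b <> i, both for c = k
   and for c = k^-1.  Take a minimal nonempty C in R closed under i |-> a, b and
   a point r of C.  The integer matrix of the system c x_i = x_a + (c - 1) x_b
   (i in C \ r, x_r = 0) is a weakly diagonally dominant Z-matrix, so its
   determinant lies in [0, c^(|C|-1)]; it is nonzero by the maximum principle
   (this is where minimality of C is used), but vanishes mod p because
   x_i = i - r solves the system in F_p.  So p <= c^(|R|-1), and equality is
   impossible as p is prime. *)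

From mathcomp Require Import all_boot all_order all_algebra.
From mathcomp Require Import ring lra zify.
Set Implicit Arguments. Unset Strict Implicit. Unset Printing Implicit Defensive.
Import Order.TTheory GRing.Theory Num.Theory.
Local Open Scope ring_scope.

Section SchurComplement.
Variables (F : fieldType) (n : nat).

Definition schur_mx (A : 'M[F]_(1 + n)) : 'M[F]_n :=
  drsubmx A - (A 0 0)^-1 *: (dlsubmx A *m ursubmx A).

Lemma schur_mxE (A : 'M[F]_(1 + n)) i j : schur_mx A i j =
  A (rshift 1 i) (rshift 1 j) - (A 0 0)^-1 * (A (rshift 1 i) 0 * A 0 (rshift 1 j)).
Proof. by rewrite !mxE big_ord1 !mxE lshift0. Qed.

Lemma det_schur_mx (A : 'M[F]_(1 + n)) : A 0 0 != 0 -> \det A = A 0 0 * \det (schur_mx A).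
Proof.
move=> a0; have ulA : ulsubmx A = (A 0 0)%:M.
  by rewrite [LHS]mx11_scalar !mxE lshift0.
have eA : A = block_mx 1%:M 0 ((A 0 0)^-1 *: dlsubmx A) 1%:M *m
              block_mx (ulsubmx A) (ursubmx A) 0 (schur_mx A).
  rewrite mulmx_block !mul1mx !mul0mx !addr0 ulA -scalemxAl mul_mx_scalar.
  by rewrite scalerA mulVf // scale1r -scalemxAl addrC subrK -ulA submxK.
by rewrite [in LHS]eA det_mulmx det_lblock det_ublock !det1 !mul1r ulA det_scalar1.
Qed.

End SchurComplement.

Section DominantZMatrix.
Variable R : realFieldType.

Definition wdd_Zmx n (A : 'M[R]_n) :=
  (forall i j, i != j -> A i j <= 0) /\ (forall i, 0 <= \sum_j A i j).

Lemma wdd_Zmx_offdiag_sum n (A : 'M[R]_n) i :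
  wdd_Zmx A -> \sum_(j | j != i) A i j <= 0.
Proof.
case=> Aoff _; rewrite -oppr_ge0 -sumrN.
by apply: sumr_ge0 => j ji; rewrite oppr_ge0 Aoff // eq_sym.
Qed.

Lemma wdd_Zmx_diag_ge0 n (A : 'M[R]_n) i : wdd_Zmx A -> 0 <= A i i.
Proof.
move=> Awdd; have := Awdd.2 i; rewrite (bigD1 i) //=.
have := wdd_Zmx_offdiag_sum i Awdd; lra.
Qed.

Lemma wdd_Zmx_row_eq0 n (A : 'M[R]_n) i j :
  wdd_Zmx A -> A i i = 0 -> A i j = 0.
Proof.
move=> Awdd Aii; have [-> //|ji] := eqVneq j i.
have Aoff k : k != i -> 0 <= - A i k by move=> ki; rewrite oppr_ge0 Awdd.1 // eq_sym.
have : \sum_(k | k != i) - A i k = 0.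
  apply/eqP; rewrite eq_le sumr_ge0 // andbT sumrN oppr_le0.
  by have := Awdd.2 i; rewrite (bigD1 i) //= Aii add0r.
by move/(psumr_eq0P Aoff)/(_ j ji)/eqP; rewrite oppr_eq0 => /eqP.
Qed.

Section Schur.
Variables (n : nat) (A : 'M[R]_(1 + n)).
Hypotheses (Awdd : wdd_Zmx A) (A00_gt0 : 0 < A 0 0).

Let schur_corr_ge0 i j : 0 <= (A 0 0)^-1 * (A (rshift 1 i) 0 * A 0 (rshift 1 j)).
Proof. by apply: mulr_ge0; [rewrite invr_ge0 ltW | apply: mulr_le0; apply: Awdd.1]. Qed.

Lemma schur_mx_diag_le i : schur_mx A i i <= A (rshift 1 i) (rshift 1 i).
Proof. by rewrite schur_mxE lerBlDr lerDl. Qed.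

Lemma wdd_Zmx_schur : wdd_Zmx (schur_mx A).
Proof.
set a := A 0 0; have ai_gt0 : 0 < a^-1 by rewrite invr_gt0.
split=> [i j ij | i].
  rewrite schur_mxE; have Aij : A (rshift 1 i) (rshift 1 j) <= 0.
    by apply: Awdd.1; rewrite (inj_eq (@rshift_inj 1 n)).
  by have := schur_corr_ge0 i j; lra.
have rowi := Awdd.2 (rshift 1 i); have row0 := Awdd.2 0.
rewrite big_split_ord big_ord1 lshift0 /= in rowi.
rewrite big_split_ord big_ord1 lshift0 /= -/a in row0.
set b := A (rshift 1 i) 0 in rowi *.
set q := \sum_j A 0 (rshift 1 j) in row0.
have b_le0 : b <= 0 by apply: Awdd.1.
under eq_bigr => j _ do rewrite schur_mxE mulrA.
rewrite sumrB -mulr_sumr -mulrA -/q.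
have : a^-1 * (b * (a + q)) <= 0.
  by apply: mulr_ge0_le0; [exact: ltW | apply: mulr_le0_ge0 => //; lra].
rewrite -/a -/b !mulrDr (mulrC b a) mulKf ?gt_eqF //; lra.
Qed.

End Schur.

Lemma wdd_Zmx_det_bound n (A : 'M[R]_n) :
  wdd_Zmx A -> 0 <= \det A <= \prod_i A i i.
Proof.
elim: n A => [|n IH] A Awdd; first by rewrite det_mx00 big_ord0 lexx ler01.
change 'M[R]_(1 + n) in A.
have [A00|A00] := eqVneq (A 0 0) 0.
  rewrite (expand_det_row _ 0) big1 ?big_ord_recl ?A00 ?mul0r ?lexx // => j _.
  by rewrite (wdd_Zmx_row_eq0 j Awdd A00) mul0r.
have A00_gt0 : 0 < A 0 0 by rewrite lt_def A00 wdd_Zmx_diag_ge0.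
have /andP[detS_ge0 detS_le] := IH _ (wdd_Zmx_schur Awdd A00_gt0).
rewrite det_schur_mx // (big_split_ord _ (m := 1)) big_ord1 lshift0 /=.
have A00_ge0 := ltW A00_gt0.
rewrite mulr_ge0 //= ler_wpM2l // (le_trans detS_le) //.
apply: ler_prod => i _; rewrite schur_mx_diag_le // andbT.
exact: wdd_Zmx_diag_ge0 (wdd_Zmx_schur Awdd A00_gt0).
Qed.

End DominantZMatrix.

Lemma sum_mul_delta (F : pzSemiRingType) (I : finType) (v : I -> F) a :
  \sum_i v i * (a == i)%:R = v a.
Proof.
rewrite (bigD1 a) //= eqxx mulr1 big1 ?addr0 // => i ia.
by rewrite eq_sym (negbTE ia) mulr0.
Qed.

Lemma Fp_nat_inj p (i j : 'I_p) : prime p -> i%:R = j%:R :> 'F_p -> i = j.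
Proof.
move=> p_pr /(congr1 (@nat_of_ord _)).
by rewrite !val_Fp_nat // !modn_small //; apply: val_inj.
Qed.

Definition closed_by2 (T : finType) (f g : T -> T) (S : {set T}) :=
  [forall i in S, (f i \in S) && (g i \in S)].

Lemma closed_by2P (T : finType) (f g : T -> T) (S : {set T}) :
  reflect (forall i, i \in S -> f i \in S /\ g i \in S) (closed_by2 f g S).
Proof.
apply: (iffP forall_inP) => [h i /h /andP // | h i /h [-> ->] //].
Qed.

Section RelationMatrix.
Variables (p c : nat) (fa fb : 'I_p -> 'I_p) (C : {set 'I_p}) (r : 'I_p).
Local Notation D := (C :\ r).

(* Row i in D encodes c x_i - x_(fa i) - (c - 1) x_(fb i) with the unknowns
   outside D set to 0; the rows outside D are those of the identity. *)
Definition relation_mx (F : pzRingType) : 'M[F]_p := \matrix_(i, j)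
  if i \in D then c%:R * (i == j)%:R - (fa i \in D)%:R * (fa i == j)%:R
                  - (c%:R - 1) * ((fb i \in D)%:R * (fb i == j)%:R)
  else (i == j)%:R.

Lemma map_relation_mx (F G : pzRingType) (f : {rmorphism F -> G}) :
  map_mx f (relation_mx F) = relation_mx G.
Proof.
apply/matrixP => i j; rewrite !mxE; case: ifP => _; last exact: rmorph_nat.
by rewrite !(rmorphB, rmorphM, rmorph1, rmorph_nat).
Qed.

Lemma relation_mx_sum (F : comPzRingType) (v : 'I_p -> F) i :
  \sum_j v j * relation_mx F i j =
  if i \in D then c%:R * v i - (fa i \in D)%:R * v (fa i)
                  - (c%:R - 1) * ((fb i \in D)%:R * v (fb i))
  else v i.
Proof.
under eq_bigr => j _ do rewrite mxE.
case: ifP => _; last exact: sum_mul_delta.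
rewrite (eq_bigr (fun j => c%:R * (v j * (i == j)%:R)
    - (fa i \in D)%:R * (v j * (fa i == j)%:R)
    - (c%:R - 1) * ((fb i \in D)%:R * (v j * (fb i == j)%:R)))) => [|j _]; last by ring.
by rewrite !sumrB -!mulr_sumr !sum_mul_delta.
Qed.

Hypotheses (c_gt1 : (1 < c)%N) (r_in_C : r \in C).
Hypothesis C_min : minset [pred S | (S != set0) && closed_by2 fa fb S] C.

Let C_closed : forall i, i \in C -> fa i \in C /\ fb i \in C.
Proof. by apply/closed_by2P; case/andP: (minsetp C_min). Qed.

Lemma relation_max_principle (R : realFieldType) (y : 'I_p -> R) :
  (forall j, j \notin D -> y j = 0) ->
  (forall j, j \in D -> c%:R * y j = y (fa j) + (c%:R - 1) * y (fb j)) ->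
  forall i, y i <= 0.
Proof.
move=> y_out y_rel i; rewrite leNgt; apply/negP => yi_gt0.
have [m _ y_le_m] := @arg_maxP _ R 'I_p i xpredT y isT.
have ym_gt0 : 0 < y m := lt_le_trans yi_gt0 (y_le_m i isT).
have c1_gt0 : (0 : R) < c%:R - 1 by rewrite subr_gt0 ltr1n.
have max_in_D j : y j = y m -> j \in D.
  by move=> yj; apply: contraT => /y_out yj0; move: ym_gt0; rewrite -yj yj0 ltxx.
pose S := [set j in C | y j == y m].
have S_closed : closed_by2 fa fb S.
  apply/closed_by2P => j; rewrite inE => /andP[jC /eqP yj].
  have [faC fbC] := C_closed jC.
  have := y_rel j (max_in_D j yj); rewrite yj.
  have := y_le_m (fa j) isT; have := y_le_m (fb j) isT.
  (* both terms are at most y m and their weights 1, c - 1 are positive *)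
  rewrite !inE faC fbC /=; nra.
have S_eq_C : S = C.
  apply: (minsetinf C_min); last by apply/subsetP => j; rewrite inE => /andP[].
  rewrite /= S_closed andbT; apply/set0Pn; exists m.
  by rewrite inE eqxx andbT; have := max_in_D m erefl; rewrite inE => /andP[].
have : r \in S by rewrite S_eq_C.
by rewrite inE => /andP[_ /eqP /max_in_D]; rewrite !inE eqxx.
Qed.

Lemma relation_mx_det_neq0 (R : realFieldType) : \det (relation_mx R) != 0.
Proof.
rewrite -det_tr; apply/det0P => -[v v_neq0 vB].
pose y j := v 0 j.
have y_eq i : (if i \in D then c%:R * y i - (fa i \in D)%:R * y (fa i)
                  - (c%:R - 1) * ((fb i \in D)%:R * y (fb i)) else y i) = 0.
  rewrite -relation_mx_sum; transitivity ((v *m (relation_mx R)^T) 0 i).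
    by rewrite !mxE; apply: eq_bigr => j _; rewrite !mxE.
  by rewrite vB mxE.
have y_out j : j \notin D -> y j = 0.
  by move=> jD; have := y_eq j; rewrite (negbTE jD).
have indE j : (j \in D)%:R * y j = y j.
  by have [jD|/y_out ->] := boolP (j \in D); rewrite ?mul1r ?mulr0.
have y_rel j : j \in D -> c%:R * y j = y (fa j) + (c%:R - 1) * y (fb j).
  by move=> jD; have := y_eq j; rewrite jD !indE; lra.
have y_le0 := relation_max_principle y_out y_rel.
have y_ge0 : forall i, - y i <= 0.
  apply: relation_max_principle => [j /y_out -> | j /y_rel yj]; first by rewrite oppr0.
  by rewrite mulrN yj; ring.
move/eqP: v_neq0; apply; apply/rowP => j; rewrite mxE.
by apply/eqP; rewrite eq_le y_le0 -oppr_le0 y_ge0.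
Qed.

Lemma relation_mx_det_bound (R : realFieldType) :
  0 <= \det (relation_mx R) <= c%:R ^+ #|D|.
Proof.
have c_ge1 : (1 : R) <= c%:R by rewrite ler1n ltnW.
have Bwdd : wdd_Zmx (relation_mx R).
  split=> [i j ij | i].
    rewrite mxE (negbTE ij) mulr0 sub0r; case: ifP => // _.
    rewrite -opprD oppr_le0 addr_ge0 ?mulr_ge0 //; lra.
  have := relation_mx_sum (fun=> (1 : R)) i; under eq_bigr => j _ do rewrite mul1r.
  move=> ->; case: ifP => // _; rewrite !mulr1.
  by case: (fa i \in D); case: (fb i \in D); rewrite /= ?mulr1n ?mulr0n ?mulr1 ?mulr0; lra.
have /andP[-> det_le] := wdd_Zmx_det_bound Bwdd; apply: (le_trans det_le).
rewrite -prodr_const [X in _ <= X]big_mkcond /=; apply: ler_prod => i _.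
rewrite wdd_Zmx_diag_ge0 //= mxE eqxx; case: ifP => // _.
have := mulr_ge0 (ler0n R (fa i \in D)) (ler0n R (fa i == i)).
have := mulr_ge0 (ler0n R (fb i \in D)) (ler0n R (fb i == i)).
rewrite mulr1; nra.
Qed.

Lemma relation_mx_Fp_singular : prime p -> fb r != r ->
  (forall j, j \in C -> c%:R * j%:R = (fa j)%:R + (c%:R - 1) * (fb j)%:R :> 'F_p) ->
  \det (relation_mx 'F_p) = 0.
Proof.
move=> p_pr fbr_neq rel; apply/eqP; rewrite -det_tr; apply/det0P.
pose v j : 'F_p := if j \in D then j%:R - r%:R else 0.
have indE j : j \in C -> (j \in D)%:R * v j = j%:R - r%:R.
  rewrite /v => jC; case: (boolP (j \in D)) => [_|]; first by rewrite mul1r.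
  by rewrite !inE jC andbT negbK => /eqP ->; rewrite mul0r subrr.
exists (\row_j v j).
  have [_ fbrC] := C_closed r_in_C.
  have fbrD : fb r \in D by rewrite !inE fbr_neq.
  apply: contra fbr_neq => /eqP/rowP/(_ (fb r)); rewrite !mxE /v fbrD.
  by move/eqP; rewrite subr_eq0 => /eqP/(Fp_nat_inj p_pr) ->.
apply/rowP => i; rewrite !mxE (eq_bigr (fun j => v j * relation_mx 'F_p i j)).
  rewrite relation_mx_sum; case: ifP => iD; last by rewrite /v iD.
  have iC : i \in C by move: iD; rewrite inE => /andP[].
  have [faC fbC] := C_closed iC.
  by rewrite !indE // {1}/v iD mulrBr rel //; ring.
by move=> j _; rewrite !mxE.
Qed.

Lemma relation_prime_le_expn : prime p -> fb r != r ->
  (forall j, j \in C -> c%:R * j%:R = (fa j)%:R + (c%:R - 1) * (fb j)%:R :> 'F_p) ->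
  (p <= c ^ #|D|)%N.
Proof.
move=> p_pr fbr_neq rel; pose d := \det (relation_mx int).
have d_rat : d%:~R = \det (relation_mx rat) by rewrite -det_map_mx map_relation_mx.
have d_Fp : d%:~R = 0 :> 'F_p.
  by rewrite -det_map_mx map_relation_mx relation_mx_Fp_singular.
have d_neq0 : d != 0 by rewrite -(intr_eq0 rat) d_rat relation_mx_det_neq0.
have /andP[d_ge0 d_le] := relation_mx_det_bound rat.
rewrite -d_rat ler0z in d_ge0 d_le.
case: d d_ge0 d_rat d_Fp d_neq0 d_le => // n _ _ /= n_Fp n_neq0.
rewrite -natrX ler_nat => /(leq_trans _); apply; apply: dvdn_leq; first by rewrite lt0n.
by rewrite (dvdn_pcharf (pchar_Fp p_pr)); apply/eqP; exact: n_Fp.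
Qed.

End RelationMatrix.

Lemma relation_set_prime_le_expn p c (R : {set 'I_p}) :
  prime p -> (1 < c)%N -> R != set0 ->
  (forall i, i \in R -> exists a b, [/\ a \in R, b \in R, b != i &
      c%:R * i%:R = a%:R + (c%:R - 1) * b%:R :> 'F_p]) ->
  (p <= c ^ #|R|.-1)%N.
Proof.
move=> p_pr c_gt1 R_neq0 Rrel.
have /fin_all_exists[f f_rel] (i : 'I_p) : exists ab : 'I_p * 'I_p, i \in R ->
    [/\ ab.1 \in R, ab.2 \in R, ab.2 != i &
     c%:R * i%:R = ab.1%:R + (c%:R - 1) * ab.2%:R :> 'F_p].
  have [/Rrel[a [b ab_rel]] | _] := boolP (i \in R); first by exists (a, b).
  by exists (i, i).
pose fa i := (f i).1; pose fb i := (f i).2.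
pose P := [pred S : {set 'I_p} | (S != set0) && closed_by2 fa fb S].
have R_closed : P R by rewrite /= R_neq0; apply/closed_by2P => i /f_rel[-> ->].
have [C C_min C_sub_R] := minset_exists R_closed.
have /andP[/set0Pn[r rC] _] := minsetp C_min.
have [_ _ fbr_neq _] := f_rel r (subsetP C_sub_R r rC).
have rel j : j \in C -> c%:R * j%:R = (fa j)%:R + (c%:R - 1) * (fb j)%:R :> 'F_p.
  by move/(subsetP C_sub_R)/f_rel => [].
apply: leq_trans (relation_prime_le_expn c_gt1 rC C_min p_pr fbr_neq rel) _.
rewrite leq_pexp2l ?(ltnW c_gt1) //; have := subset_leq_card C_sub_R.
rewrite (cardsD1 r C) rC add1n -subn1 => lt_CR.
by rewrite leq_subRL ?add1n // (leq_ltn_trans (leq0n _) lt_CR).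
Qed.

Lemma trip_eq p (t u : trip p) : cell t = cell u -> sym t = sym u -> t = u.
Proof. by case: t u => [ct st] [cu su] /= -> ->. Qed.

Lemma line_sym_transfer p (f : trip p -> 'I_p) (A B : {set trip p}) t :
  (forall l, [set sym u | u in A & f u == l] = [set sym u | u in B & f u == l]) ->
  t \in A -> exists2 u, u \in B & f u = f t /\ sym u = sym t.
Proof.
move=> AB tA; have : sym t \in [set sym u | u in A & f u == f t].
  by apply/imsetP; exists t; rewrite // inE tA eqxx.
by rewrite AB => /imsetP[u]; rewrite inE => /andP[uB /eqP ut] ->; exists u.
Qed.

Section PrimeField.
Variable p : nat.
Hypothesis p_pr : prime p.
Local Notation "n %:F" := (n%:R : 'F_p).

Lemma Fp_nat_eq m n : (m < p)%N -> (n < p)%N -> (m%:F == n%:F) = (m == n).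
Proof. by move=> mp np; rewrite -val_eqE /= !val_Fp_nat // !modn_small. Qed.

Lemma Fp_nat_surj (f : 'F_p) : exists i : 'I_p, i%:F = f.
Proof.
have f_lt : (f < p)%N by rewrite -[X in (_ < X)%N](Fp_cast p_pr) ltn_ord.
by exists (Ordinal f_lt); apply: val_inj; rewrite /= val_Fp_nat // modn_small.
Qed.

Lemma in_Bp l (t : trip p) :
  (t \in Bp p l) = ((sym t)%:F == l%:F * (row t)%:F + (col t)%:F).
Proof.
by rewrite inE -natrM -natrD -val_eqE /= !val_Fp_nat // (modn_small (ltn_ord _)).
Qed.

Lemma Fp_nat_neq01 k : (2 <= k <= p - 1)%N -> k%:F != 0 /\ k%:F != 1.
Proof.
have p_gt1 := prime_gt1 p_pr; case/andP=> k_ge2 k_le.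
by rewrite -[0]/(0%:F) -[1]/(1%:F) !Fp_nat_eq //; lia.
Qed.

Lemma kinv_spec k : (2 <= k <= p - 1)%N ->
  k%:F * (kinv p k)%:F = 1 /\ (1 < kinv p k < p)%N.
Proof.
move=> k_range; have [k_neq0 k_neq1] := Fp_nat_neq01 k_range.
rewrite /kinv; case: pickP => [x /eqP kx | no_inv]; last first.
  have [x xE] := Fp_nat_surj (k%:F)^-1.
  have := no_inv x; rewrite -Fp_nat_eq ?ltn_mod ?prime_gt0 //.
  by rewrite !(Fp_nat_mod p_pr) natrM xE mulfV.
have kxE : k%:F * x%:F = 1 by rewrite -natrM -(Fp_nat_mod p_pr) kx Fp_nat_mod.
split=> //; rewrite ltn_ord andbT.
case: x kx kxE => [[|[|x]] x_lt] //= _; rewrite ?mulr0 ?mulr1 => /eqP.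
  by rewrite eq_sym oner_eq0.
by rewrite (negbTE k_neq1).
Qed.

Section OrthogonalTrade.
Variables (k : nat) (T T' : {set trip p}) (s : 'I_p).
Hypotheses (k_range : (2 <= k <= p - 1)%N) (T_sub : T \subset Bp p 1).
Hypotheses (T'_mate : disjoint_mate T T')
           (orth : orthogonal ((Bp p 1 :\: T) :|: T') (Bp p k)).

Definition sym_rows := row @: [set t in T | sym t == s].

Lemma sym_rowsP i :
  reflect (exists2 t, t \in T & row t = i /\ sym t = s) (i \in sym_rows).
Proof.
apply: (iffP imsetP) => [[t] | [t tT [<- ts]]].
  by rewrite inE => /andP[tT /eqP ts] ->; exists t.
by exists t; rewrite ?inE ?tT ?ts ?eqxx.
Qed.

Lemma T_sym t : t \in T -> (sym t)%:F = (row t)%:F + (col t)%:F.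
Proof. by move/(subsetP T_sub); rewrite in_Bp mul1r => /eqP. Qed.

Lemma occ_sym_rows : occ T s = #|sym_rows|.
Proof.
rewrite /occ /sym_rows card_in_imset // => t u.
rewrite !inE => /andP[tT /eqP ts] /andP[uT /eqP us] tu.
apply: trip_eq; last by rewrite ts us.
have /(Fp_nat_inj p_pr) tu_col : (col t)%:F = (col u)%:F.
  by apply: (addrI (row t)%:F); rewrite -T_sym // tu -T_sym // ts us.
rewrite /cell [t.1]surjective_pairing [u.1]surjective_pairing.
by congr pair; [exact: tu | exact: tu_col].
Qed.

Lemma mate_notin_Bp1 u : u \in T' -> (sym u)%:F != (row u)%:F + (col u)%:F.
Proof.
case: T'_mate => _ cellsE TT'_disj _ _ uT'; apply/negP => /eqP u_sym.
have : cell u \in [set cell t | t in T] by rewrite cellsE; apply/imsetP; exists u.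
case/imsetP=> t tT tu_cell.
have tu : t = u.
  apply: trip_eq => //; apply: Fp_nat_inj p_pr _; rewrite T_sym // u_sym.
  by rewrite /row /col -/(cell t) -/(cell u) tu_cell.
by move: (disjointFr TT'_disj tT); rewrite tu uT'.
Qed.

Lemma mate_row_in_sym_rows u : u \in T' -> sym u = s -> row u \in sym_rows.
Proof.
case: T'_mate => _ _ _ rowsE _ uT' us.
have [t tT [tu_row tu_sym]] := line_sym_transfer (fun l => esym (rowsE l)) uT'.
by apply/sym_rowsP; exists t; rewrite // tu_sym.
Qed.

Lemma mate_col_sym_rows u : u \in T' -> sym u = s ->
  exists2 z, z \in sym_rows & z%:F + (col u)%:F = s%:F.
Proof.
case: T'_mate => _ _ _ _ colsE uT' us.
have [t tT [tu_col tu_sym]] := line_sym_transfer (fun l => esym (colsE l)) uT'.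
exists (row t); first by apply/sym_rowsP; exists t; rewrite // tu_sym.
by rewrite -tu_col -T_sym // tu_sym us.
Qed.

(* The cell (b, s - b) has symbol s in B_p and the same B_p(k)-symbol as u, so
   by orthogonality it cannot keep symbol s outside T. *)
Lemma mate_orthogonal_row u : u \in T' -> sym u = s ->
  exists2 b, b \in sym_rows & (k%:F - 1) * b%:F = k%:F * (row u)%:F + (col u)%:F - s%:F.
Proof.
move=> uT' us; have k1_neq0 : k%:F - 1 != 0 by rewrite subr_eq0 (Fp_nat_neq01 k_range).2.
pose b0 := k%:F * (row u)%:F + (col u)%:F.
have [b bE] := Fp_nat_surj ((k%:F - 1)^-1 * (b0 - s%:F)).
have [c' c'E] := Fp_nat_surj (s%:F - b%:F).
have b_rel : (k%:F - 1) * b%:F = b0 - s%:F by rewrite bE mulVKf.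
exists b => //; apply/sym_rowsP; exists ((b, c'), s) => //.
apply/negPn/negP => bc'_notin_T.
have [b0' b0'E] := Fp_nat_surj b0.
have /card_le1_eqP := eq_leq (orth s b0'); set A := [set x | _] => A_eq.
have u_in_A : cell u \in A.
  have u_eta : (cell u, s) = u by rewrite -us [RHS]surjective_pairing.
  by rewrite inE u_eta in_setU uT' orbT in_Bp b0'E eqxx.
have bc'_in_A : (b, c') \in A.
  rewrite inE in_setU in_setD bc'_notin_T !in_Bp /= mul1r c'E subrKC eqxx /=.
  by rewrite b0'E -[b0](subrK s%:F) -b_rel; apply/eqP; ring.
have := mate_notin_Bp1 uT'.
by rewrite us /row /col -/(cell u) -(A_eq _ _ u_in_A bc'_in_A) /= c'E subrKC eqxx.
Qed.

Lemma sym_rows_rel_k i : i \in sym_rows -> exists a b,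
  [/\ a \in sym_rows, b \in sym_rows, b != i & k%:F * i%:F = a%:F + (k%:F - 1) * b%:F].
Proof.
case/sym_rowsP=> t tT [ti ts]; case: T'_mate => _ _ _ rowsE _.
have [u uT' [ut_row ut_sym]] := line_sym_transfer rowsE tT.
have us : sym u = s by rewrite ut_sym.
have [a aR a_rel] := mate_col_sym_rows uT' us.
have [b bR b_rel] := mate_orthogonal_row uT' us; rewrite ut_row ti in b_rel.
exists a, b; split=> //; last by rewrite b_rel -a_rel; ring.
apply: contra (mate_notin_Bp1 uT') => /eqP bi; rewrite us ut_row ti.
rewrite bi in b_rel.
have -> : s%:F = k%:F * i%:F + (col u)%:F - (k%:F - 1) * i%:F by rewrite b_rel; ring.
by apply/eqP; ring.
Qed.

Lemma sym_rows_rel_kinv j : j \in sym_rows -> exists a b,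
  [/\ a \in sym_rows, b \in sym_rows, b != j &
       (kinv p k)%:F * j%:F = a%:F + ((kinv p k)%:F - 1) * b%:F].
Proof.
case/sym_rowsP=> t tT [tj ts]; case: T'_mate => _ _ _ _ colsE.
have [u uT' [ut_col ut_sym]] := line_sym_transfer colsE tT.
have us : sym u = s by rewrite ut_sym.
have [b bR b_rel] := mate_orthogonal_row uT' us.
have s_rel := T_sym tT; rewrite tj ts -ut_col in s_rel.
have [kk' _] := kinv_spec k_range; set k' := kinv p k in kk' *.
exists (row u), b; split; [exact: mate_row_in_sym_rows | by [] | |].
  apply: contra (mate_notin_Bp1 uT') => /eqP bj.
  have kj_eq : k%:F * j%:F = k%:F * (row u)%:F.
    apply/eqP; rewrite -subr_eq0.
    have -> : k%:F * j%:F - k%:F * (row u)%:F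
            = (k%:F - 1) * j%:F - (k%:F * (row u)%:F + (col u)%:F - s%:F).
      by rewrite s_rel; ring.
    by rewrite -bj b_rel subrr.
  have /(Fp_nat_inj p_pr) ju := mulfI (Fp_nat_neq01 k_range).1 kj_eq.
  by rewrite us -ju s_rel.
apply/eqP; rewrite -subr_eq0.
(* [b_rel] multiplied by k^-1 *)
have -> : k'%:F * j%:F - ((row u)%:F + (k'%:F - 1) * b%:F)
        = k'%:F * ((k%:F - 1) * b%:F - (k%:F * (row u)%:F + (col u)%:F - s%:F))
          - (k%:F * k'%:F - 1) * (b%:F - (row u)%:F) by rewrite s_rel; ring.
by rewrite b_rel kk' !subrr mulr0 mul0r subrr.
Qed.

End OrthogonalTrade.

End PrimeField.

Lemma prime_le_expn_lt p c m : prime p -> (1 < c < p)%N -> (p <= c ^ m)%N -> (p < c ^ m)%N.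
Proof.
move=> p_pr /andP[c_gt1 c_lt]; rewrite leq_eqVlt => /predU1P[p_eq|//].
case: m p_eq => [|m] p_eq; first by move: (prime_gt1 p_pr); rewrite p_eq.
have /(prime_nt_dvdP p_pr) c_eq : (c %| p)%N by rewrite p_eq expnS dvdn_mulr.
by move: c_lt; rewrite c_eq ?ltnn //; apply: contraTneq c_gt1 => ->.
Qed.

Lemma orthogonal_trade_occ_expn p k (T : {set trip p}) s :
  prime p -> (2 <= k <= p - 1)%N -> orthogonal_trade 1 k T -> (0 < occ T s)%N ->
  (p < minn k (kinv p k) ^ (occ T s).-1)%N.
Proof.
move=> p_pr k_range [T_sub [T' [T'_mate orth]]].
have [_ /andP[kinv_gt1 kinv_lt]] := kinv_spec p_pr k_range.
have /andP[k_gt1 k_lt] : (1 < k < p)%N by case/andP: k_range (prime_gt1 p_pr); lia.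
rewrite (occ_sym_rows p_pr s T_sub) card_gt0 => rows_neq0.
have rows_bound c : (1 < c < p)%N -> (forall i, i \in sym_rows T s -> exists a b,
    [/\ a \in sym_rows T s, b \in sym_rows T s, b != i &
        c%:R * i%:R = a%:R + (c%:R - 1) * b%:R :> 'F_p]) ->
    (p < c ^ #|sym_rows T s|.-1)%N.
  move=> /andP[c_gt1 c_lt] rel; apply: prime_le_expn_lt => //; first by rewrite c_gt1.
  exact: relation_set_prime_le_expn.
rewrite /minn; case: (ltnP k (kinv p k)) => _; apply: rows_bound.
- by rewrite k_gt1.
- exact: sym_rows_rel_k T'_mate orth.
- by rewrite kinv_gt1.
- exact: sym_rows_rel_kinv T'_mate orth.
Qed.

Local Close Scope ring_scope.
From Stdlib Require Import Reals.

Lemma INR_expn K m : INR (expn K m) = (INR K ^ m)%R.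
Proof. by elim: m => [//|m IH]; rewrite expnS -multE mult_INR IH. Qed.

Lemma ln_div_ln_lt p K m : 0 < p -> 1 < K -> p < expn K m ->
  (ln (INR p) / ln (INR K) < INR m)%R.
Proof.
move=> p_gt0 K_gt1 p_lt.
have lnK_gt0 : (0 < ln (INR K))%R.
  rewrite -ln_1; apply: ln_increasing; first exact: Rlt_0_1.
  by apply: lt_1_INR; apply/ssrnat.ltP.
rewrite -[INR m](Rmult_div_l _ _ (Rgt_not_eq _ _ lnK_gt0)).
apply: Rmult_lt_compat_r; first exact: Rinv_0_lt_compat.
rewrite -ln_pow -?INR_expn; last by apply: lt_0_INR; apply/ssrnat.ltP; apply: ltnW.
by apply: ln_increasing; [apply: lt_0_INR | apply: lt_INR]; apply/ssrnat.ltP.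
Qed.

Theorem theorem3p4 (p k : nat) (T : {set trip p}) :
  prime p -> odd p -> 2 <= k <= p - 1 ->
  orthogonal_trade 1 k T ->
  forall s : 'I_p, 0 < occ T s ->
    (Rdiv (ln (INR p)) (ln (INR (minn k (kinv p k)))) + 1 < INR (occ T s))%R.
Proof.
move=> p_pr _ k_range trade s occ_gt0.
have p_lt := orthogonal_trade_occ_expn p_pr k_range trade occ_gt0.
have [_ /andP[kinv_gt1 _]] := kinv_spec p_pr k_range.
have K_gt1 : 1 < minn k (kinv p k) by rewrite leq_min kinv_gt1 andbT; case/andP: k_range.
rewrite -(ltn_predK occ_gt0) S_INR; apply: Rplus_lt_compat_r.
exact: ln_div_ln_lt (prime_gt0 p_pr) K_gt1 p_lt.
Qed.
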